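(* Let $I,I',I'':B_0(\Sigma)\to\mathbb{R}$ be monotonic and constant-linear with $I'\le I''$ (pointwise on $B_0(\Sigma)$). Then the following are equivalent: (i) for all $\phi,\varphi\in B_0(\Sigma)$, if $I'(\phi)>I'(\varphi)$ and $I''(\phi)>I''(\varphi)$, then $I(\phi)>I(\varphi)$; (ii) there exists $\alpha\in[0,1]$ such that $I(\varphi)=\alpha I'(\varphi)+(1-\alpha)I''(\varphi)$ for all $\varphi\in B_0(\Sigma)$.
   Context: $(S,\Sigma)$ is a set with an algebra of subsets; $B_0(\Sigma)$ is the set of real-valued $\Sigma$-measurable simple functions on $S$. A functional $I:B_0(\Sigma)\to\mathbb{R}$ is constant-linear if $I(a\varphi+b)=aI(\varphi)+b$ for all $\varphi\in B_0(\Sigma)$, $a\ge 0$, $b\in\mathbb{R}$ (where $b$ denotes the constant function), and monotonic if $\varphi\ge\psi$ pointwise implies $I(\varphi)\ge I(\psi)$. *)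

From Stdlib Require Export Reals List.
Open Scope R_scope.
Set Implicit Arguments.

Record is_algebra (S : Type) (Sigma : (S -> Prop) -> Prop) : Prop := {
  alg_empty : Sigma (fun _ => False);
  alg_compl : forall A, Sigma A -> Sigma (fun s => ~ A s);
  alg_union : forall A B, Sigma A -> Sigma B -> Sigma (fun s => A s \/ B s)
}.

Definition B0 (S : Type) (Sigma : (S -> Prop) -> Prop) (f : S -> R) : Prop :=
  (exists l : list R, forall s, In (f s) l) /\
  (forall r : R, Sigma (fun s => f s = r)).

(* Functionals are given as total maps on S -> R; only their values on B0
   matter, all properties are quantified over B0. *)
Definition constant_linear (S : Type) (Sigma : (S -> Prop) -> Prop)
  (I : (S -> R) -> R) : Prop :=
  forall (phi : S -> R) (a b : R), B0 Sigma phi -> 0 <= a ->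
    I (fun s => a * phi s + b) = a * I phi + b.

Definition monotonic (S : Type) (Sigma : (S -> Prop) -> Prop)
  (I : (S -> R) -> R) : Prop :=
  forall phi psi : S -> R, B0 Sigma phi -> B0 Sigma psi ->
    (forall s, psi s <= phi s) -> I psi <= I phi.

From Stdlib Require Import Reals Lra List FunctionalExtensionality PropExtensionality Classical.

Set Implicit Arguments.

(* Comparing [phi] with constant functions shows [I' <= I <= I''].  When [I' phi < I'' phi], the affine
   rescaling of [phi] on which [I'] and [I''] take the values [d] and [1 + d]
   is sent by [I] to [weight phi + d], where [weight phi] is the relative
   position of [I phi] in [[I' phi, I'' phi]].  Applying (i) to such rescalings
   of two functions, with [d] the difference of their weights, shows that the
   weight is constant, and [alpha = 1 - weight]. *)

Section SimpleFunctions.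

Variables (S : Type) (Sigma : (S -> Prop) -> Prop).
Hypothesis HSigma : is_algebra Sigma.

Lemma algebra_const_set (P : Prop) : Sigma (fun _ => P).
Proof.
  destruct (classic P) as [HP | HP].
  - replace (fun _ : S => P) with (fun _ : S => ~ False).
    + exact (alg_compl HSigma _ (alg_empty HSigma)).
    + apply functional_extensionality; intros _.
      apply propositional_extensionality; tauto.
  - replace (fun _ : S => P) with (fun _ : S => False).
    + exact (alg_empty HSigma).
    + apply functional_extensionality; intros _.
      apply propositional_extensionality; tauto.
Qed.

Lemma B0_const (c : R) : B0 Sigma (fun _ => c).
Proof.
  split.
  - exists (c :: nil); intros _; now left.
  - intro r; apply algebra_const_set.
Qed.

Lemma B0_affine (phi : S -> R) (a b : R) :
  B0 Sigma phi -> B0 Sigma (fun s => a * phi s + b).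
Proof.
  intros [[l Hl] Hlevel]; split.
  - exists (map (fun x => a * x + b) l); intro s.
    apply (in_map (fun x => a * x + b)), Hl.
  - intro r; destruct (Req_EM_T a 0) as [-> | Ha].
    + replace (fun s => 0 * phi s + b = r) with (fun _ : S => b = r).
      * apply algebra_const_set.
      * apply functional_extensionality; intro s.
        apply propositional_extensionality; split; intro; lra.
    + replace (fun s => a * phi s + b = r) with (fun s => phi s = (r - b) / a).
      * apply Hlevel.
      * apply functional_extensionality; intro s.
        apply propositional_extensionality; split; intro E.
        -- rewrite E; field; exact Ha.
        -- rewrite <- E; field; exact Ha.
Qed.

Lemma constant_linear_const (J : (S -> R) -> R) (c : R) :
  constant_linear Sigma J -> J (fun _ => c) = c.
Proof.
  intro HJ.
  pose proof (HJ (fun _ => 0) 0 c (B0_const 0) (Rle_refl 0)) as E; simpl in E.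
  replace (fun _ : S => c) with (fun _ : S => 0 * 0 + c).
  - rewrite E; ring.
  - apply functional_extensionality; intros _; ring.
Qed.

End SimpleFunctions.

Lemma mixture_lt (alpha x' x'' y' y'' : R) :
  0 <= alpha <= 1 -> y' < x' -> y'' < x'' ->
  alpha * y' + (1 - alpha) * y'' < alpha * x' + (1 - alpha) * x''.
Proof.
  intros Halpha H' H''.
  destruct (Req_EM_T alpha 0) as [-> | Hpos]; [lra |].
  assert (0 < alpha * (x' - y')) by (apply Rmult_lt_0_compat; lra).
  assert (0 <= (1 - alpha) * (x'' - y'')) by (apply Rmult_le_pos; lra).
  lra.
Qed.

Section ParetoFunctionals.

Variables (S : Type) (Sigma : (S -> Prop) -> Prop).
Hypothesis HSigma : is_algebra Sigma.
Variables I I' I'' : (S -> R) -> R.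
Hypotheses (HIl : constant_linear Sigma I) (HI'l : constant_linear Sigma I')
  (HI''l : constant_linear Sigma I'').
Hypothesis Hle : forall phi, B0 Sigma phi -> I' phi <= I'' phi.
Hypothesis Hpareto : forall phi vphi : S -> R, B0 Sigma phi -> B0 Sigma vphi ->
  I' phi > I' vphi -> I'' phi > I'' vphi -> I phi > I vphi.

Lemma pareto_bounds (phi : S -> R) : B0 Sigma phi -> I' phi <= I phi <= I'' phi.
Proof.
  intro Hphi; pose proof (Hle Hphi).
  pose proof (constant_linear_const HSigma) as Hc.
  split; apply Rnot_gt_le; intro Hgt.
  - assert (Hlt : I phi > I (fun _ => (I phi + I' phi) / 2)).
    { apply Hpareto; try apply B0_const; try rewrite Hc; auto; lra. }
    rewrite Hc in Hlt by assumption; lra.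
  - assert (Hlt : I (fun _ => (I phi + I'' phi) / 2) > I phi).
    { apply Hpareto; try apply B0_const; try rewrite Hc; auto; lra. }
    rewrite Hc in Hlt by assumption; lra.
Qed.

Definition weight (phi : S -> R) : R := (I phi - I' phi) / (I'' phi - I' phi).

Definition normalize (phi : S -> R) (d : R) : S -> R :=
  fun s => / (I'' phi - I' phi) * phi s + (d - I' phi / (I'' phi - I' phi)).

Lemma constant_linear_normalize (J : (S -> R) -> R) (phi : S -> R) (d : R) :
  constant_linear Sigma J -> B0 Sigma phi -> I' phi < I'' phi ->
  J (normalize phi d) = (J phi - I' phi) / (I'' phi - I' phi) + d.
Proof.
  intros HJ Hphi Hgap; unfold normalize.
  rewrite HJ by (auto; left; apply Rinv_0_lt_compat; lra).
  field; lra.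
Qed.

Lemma normalize_values (phi : S -> R) (d : R) :
  B0 Sigma phi -> I' phi < I'' phi ->
  I' (normalize phi d) = d /\ I'' (normalize phi d) = 1 + d /\
  I (normalize phi d) = weight phi + d.
Proof.
  intros Hphi Hgap; unfold weight.
  rewrite !constant_linear_normalize by assumption.
  repeat split; field; lra.
Qed.

Lemma pareto_weight_le (phi psi : S -> R) :
  B0 Sigma phi -> B0 Sigma psi -> I' phi < I'' phi -> I' psi < I'' psi ->
  weight phi <= weight psi.
Proof.
  intros Hphi Hpsi Gphi Gpsi; apply Rnot_gt_le; intro Hgt.
  set (d := weight phi - weight psi).
  destruct (normalize_values 0 Hphi Gphi) as (E1' & E1'' & E1).
  destruct (normalize_values d Hpsi Gpsi) as (E2' & E2'' & E2).
  assert (Hlt : I (normalize psi d) > I (normalize phi 0)).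
  { apply Hpareto; try (apply B0_affine; assumption).
    - rewrite E1', E2'; unfold d; lra.
    - rewrite E1'', E2''; unfold d; lra. }
  rewrite E1, E2 in Hlt; unfold d in Hlt; lra.
Qed.

Lemma pareto_weight_bounds (phi : S -> R) :
  B0 Sigma phi -> I' phi < I'' phi -> 0 <= weight phi <= 1.
Proof.
  intros Hphi Hgap; pose proof (pareto_bounds Hphi); unfold weight; split.
  - apply Rle_mult_inv_pos; lra.
  - apply Rmult_le_reg_r with (I'' phi - I' phi); [lra |].
    field_simplify; lra.
Qed.

Lemma pareto_mixture : exists alpha : R, 0 <= alpha <= 1 /\
  forall vphi : S -> R, B0 Sigma vphi ->
    I vphi = alpha * I' vphi + (1 - alpha) * I'' vphi.
Proof.
  destruct (classic (exists phi0, B0 Sigma phi0 /\ I' phi0 < I'' phi0))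
    as [[phi0 [H0 G0]] | Hdegenerate].
  - exists (1 - weight phi0); split.
    + pose proof (pareto_weight_bounds H0 G0); lra.
    + intros v Hv; pose proof (pareto_bounds Hv).
      destruct (Req_EM_T (I' v) (I'' v)) as [E | E].
      * replace (I v) with (I' v) by lra; rewrite <- E; ring.
      * assert (G : I' v < I'' v) by (pose proof (Hle Hv); lra).
        replace (weight phi0) with (weight v)
          by (apply Rle_antisym; apply pareto_weight_le; assumption).
        unfold weight; field; lra.
  - exists 0; split; [lra |]; intros v Hv.
    pose proof (pareto_bounds Hv).
    assert (I' v = I'' v).
    { destruct (Rle_lt_or_eq_dec _ _ (Hle Hv)); auto.
      exfalso; apply Hdegenerate; eauto. }
    replace (I v) with (I'' v) by lra; ring.
Qed.

End ParetoFunctionals.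

Theorem lemma7 (S : Type) (Sigma : (S -> Prop) -> Prop) (HSigma : is_algebra Sigma)
  (I I' I'' : (S -> R) -> R)
  (HIm : monotonic Sigma I) (HIl : constant_linear Sigma I)
  (HI'm : monotonic Sigma I') (HI'l : constant_linear Sigma I')
  (HI''m : monotonic Sigma I'') (HI''l : constant_linear Sigma I'')
  (Hle : forall phi, B0 Sigma phi -> I' phi <= I'' phi) :
  (forall phi vphi : S -> R, B0 Sigma phi -> B0 Sigma vphi ->
     I' phi > I' vphi -> I'' phi > I'' vphi -> I phi > I vphi)
  <->
  (exists alpha : R, 0 <= alpha <= 1 /\
     forall vphi : S -> R, B0 Sigma vphi ->
       I vphi = alpha * I' vphi + (1 - alpha) * I'' vphi).
Proof.
  split.
  - intro Hpareto; exact (pareto_mixture HSigma HIl HI'l HI''l Hle Hpareto).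
  - intros [alpha [Halpha Hmix]] phi vphi Hphi Hvphi G' G''.
    rewrite (Hmix phi Hphi), (Hmix vphi Hvphi).
    apply mixture_lt; assumption.
Qed.
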